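(* Let $\mathbf a=\{a_j\}_{j\ge1}$ and $\mathbf b=\{b_j\}_{j\ge1}$ be positive sequences satisfying $0<a_1\le a_2\le\cdots$ and $\inf_j b_j>0$, and fix $\omega\in(0,1)$. Then for all $\varepsilon\in(0,1)$ and $d\in\mathbb N$, $$n(\varepsilon,\mathrm{APP}_d)=n\Big(\Big(\frac{\ln\varepsilon^{-2}}{\ln\omega^{-1}}+1\Big)^{-1/2},I_d\Big)\quad\text{and}\quad n(\varepsilon,I_d)=n\big(\omega^{(\varepsilon^{-2}-1)/2},\mathrm{APP}_d\big).$$
   Context: For $f\in L_2([0,1]^d)$, $\hat f(\mathbf k)=\int_{[0,1]^d}f(\mathbf x)e^{-2\pi i\mathbf k\cdot\mathbf x}d\mathbf x$. $W_2^{\mathbf a,\mathbf b}([0,1]^d)$ is the Hilbert space of $f\in L_2([0,1]^d)$ with norm $\|f\|^2=\sum_{\mathbf k\in\mathbb Z^d}(1+\sum_{j=1}^d a_j|k_j|^{2b_j})|\hat f(\mathbf k)|^2<\infty$, and $I_d:W_2^{\mathbf a,\mathbf b}([0,1]^d)\to L_2([0,1]^d)$ is the identity embedding. With $\omega_{\mathbf k}=\omega^{\sum_{j=1}^d a_j|k_j|^{2b_j}}$, the analytic Korobov space $H(K_{d,\mathbf a,2\mathbf b})$ is the reproducing kernel Hilbert space with kernel $K(\mathbf x,\mathbf y)=\sum_{\mathbf k\in\mathbb Z^d}\omega_{\mathbf k}e^{2\pi i\mathbf k\cdot(\mathbf x-\mathbf y)}$, i.e. functions with norm $\|f\|^2=\sum_{\mathbf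 k}|\hat f(\mathbf k)|^2\omega_{\mathbf k}^{-1}<\infty$; $\mathrm{APP}_d:H(K_{d,\mathbf a,2\mathbf b})\to L_2([0,1]^d)$, $\mathrm{APP}_d f=f$. Approximation numbers: $a_n(T)=\inf\{\|T-A\|:\mathrm{rank}\,A<n\}$. For $S_d\in\{I_d,\mathrm{APP}_d\}$ the information complexity (minimal number of continuous linear functionals needed for worst-case error $\le\varepsilon$ on the unit ball) is $n(\varepsilon,S_d)=\min\{n\ge0: a_{n+1}(S_d)\le\varepsilon\}$. *)

From Stdlib Require Import Reals Lra List ZArith.
Open Scope R_scope.

Definition Cx := (R * R)%type.
Definition Cadd (z w : Cx) : Cx := (fst z + fst w, snd z + snd w).
Definition Csub (z w : Cx) : Cx := (fst z - fst w, snd z - snd w).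
Definition Cmul (z w : Cx) : Cx :=
  (fst z * fst w - snd z * snd w, fst z * snd w + snd z * fst w).
Definition C0 : Cx := (0, 0).
Definition Cnorm2 (z : Cx) : R := fst z ^ 2 + snd z ^ 2.

(* A multi-index k = (k_1,...,k_d) is a list of integers of length d.
   A function on [0,1]^d is represented by its Fourier coefficients
   fhat : Z^d -> C (Parseval: L_2([0,1]^d) is unitarily identified with l_2(Z^d));
   values at lists of length <> d are irrelevant and ignored everywhere. *)
Definition Idx := list Z.
Definition Seq := Idx -> Cx.

Definition Sadd (f g : Seq) : Seq := fun k => Cadd (f k) (g k).
Definition Ssub (f g : Seq) : Seq := fun k => Csub (f k) (g k).
Definition Sscale (z : Cx) (f : Seq) : Seq := fun k => Cmul z (f k).
Definition eqd (d : nat) (f g : Seq) : Prop := forall k, length k = d -> f k = g k.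

(* |x|^y with the convention 0^y = 0 (used with y = 2 b_j > 0) *)
Definition rpow (x y : R) : R := if Req_EM_T x 0 then 0 else Rpower x y.

Fixpoint wsum (a b : nat -> R) (j : nat) (k : Idx) : R :=
  match k with
  | nil => 0
  | kj :: k' => a j * rpow (IZR (Z.abs kj)) (2 * b j) + wsum a b (S j) k'
  end.
Definition weight (a b : nat -> R) (k : Idx) : R := wsum a b 1 k.

Definition finset (d : nat) (F : list Idx) : Prop :=
  NoDup F /\ Forall (fun k => length k = d) F.
Definition fsum (F : list Idx) (g : Idx -> R) : R :=
  fold_right (fun k s => g k + s) 0 F.
Definition sum_le (d : nat) (g : Idx -> R) (M : R) : Prop :=
  forall F, finset d F -> fsum F g <= M.

Definition wnorm2_le (d : nat) (rho : Idx -> R) (f : Seq) (M : R) : Prop :=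
  sum_le d (fun k => rho k * Cnorm2 (f k)) M.
Definition inspace (d : nat) (rho : Idx -> R) (f : Seq) : Prop :=
  exists M, wnorm2_le d rho f M.

Definition rho_L2 : Idx -> R := fun _ => 1.
Definition rho_W (a b : nat -> R) : Idx -> R := fun k => 1 + weight a b k.
Definition omega_k (omega : R) (a b : nat -> R) (k : Idx) : R :=
  Rpower omega (weight a b k).
Definition rho_H (omega : R) (a b : nat -> R) : Idx -> R :=
  fun k => / omega_k omega a b k.

Definition linear_on (d : nat) (rho : Idx -> R) (A : Seq -> Seq) : Prop :=
  forall (f g : Seq) (z : Cx), inspace d rho f -> inspace d rho g ->
    eqd d (A (Sadd (Sscale z f) g)) (Sadd (Sscale z (A f)) (A g)).

Fixpoint lincomb (cs : list Cx) (vs : list Seq) : Seq :=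
  match cs, vs with
  | c :: cs', v :: vs' => Sadd (Sscale c v) (lincomb cs' vs')
  | _, _ => fun _ => C0
  end.

Definition rank_lt (d : nat) (rho : Idx -> R) (A : Seq -> Seq) (n : nat) : Prop :=
  exists vs : list Seq, (length vs < n)%nat /\ Forall (inspace d rho_L2) vs /\
    forall f, inspace d rho f ->
      exists cs : list Cx, length cs = length vs /\ eqd d (A f) (lincomb cs vs).

(* ||S - A|| <= c, where S is the identity embedding (on Fourier coefficients):
   ||f - A f||_{L_2}^2 <= c^2 ||f||_rho^2 for all f in the domain *)
Definition opnorm_diff_le (d : nat) (rho : Idx -> R) (A : Seq -> Seq) (c : R) : Prop :=
  forall f M, wnorm2_le d rho f M -> wnorm2_le d rho_L2 (Ssub f (A f)) (c ^ 2 * M).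

(* a_n(S) <= eps, where a_n(S) = inf { ||S - A|| : A linear, rank A < n } *)
Definition approx_num_le (d : nat) (rho : Idx -> R) (n : nat) (eps : R) : Prop :=
  forall delta, delta > 0 ->
    exists A, linear_on d rho A /\ rank_lt d rho A n /\ opnorm_diff_le d rho A (eps + delta).

(* is_ncomp d rho eps m : m = n(eps, S) = min { n >= 0 : a_{n+1}(S) <= eps },
   S the identity embedding of the rho-weighted space into L_2([0,1]^d). *)
Definition is_ncomp (d : nat) (rho : Idx -> R) (eps : R) (m : nat) : Prop :=
  approx_num_le d rho (S m) eps /\
  forall n, approx_num_le d rho (S n) eps -> (m <= n)%nat.

From Stdlib Require Import Reals Lra Lia List ZArith Classical.
Open Scope R_scope.

(* In the Fourier basis the embedding of the space with weights [rho k] into L_2 is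
   diagonal with singular values [rho k ^ (-1/2)].  Hence [a_(n+1) <= eps] iff at most
   [n] indices satisfy [rho k < eps^-2]: projecting onto these indices gives the upper
   bound, and a vector supported on [n+1] of them and orthogonal to the range of an
   operator of rank [<= n] gives the lower bound.  So [n(eps)] only depends on the set
   [{k | rho k < eps^-2}].  With [w k = sum_j a_j |k_j|^(2 b_j)] we have [rho_W = 1 + w]
   and [rho_H = omega^(-w)], and at the thresholds of the theorem both sets are
   [{k | w k < t}], with [t = ln eps^-2 / ln omega^-1], resp. [t = eps^-2 - 1]. *)

Definition idx_eq_dec : forall k l : Idx, {k = l} + {k <> l} := list_eq_dec Z.eq_dec.

Lemma fsum_ext K g h : (forall k, In k K -> g k = h k) -> fsum K g = fsum K h.
Proof.
  induction K as [|k K IH]; simpl; intros H; [reflexivity|].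
  rewrite H, IH by auto. reflexivity.
Qed.

Lemma fsum_plus K g h : fsum K (fun k => g k + h k) = fsum K g + fsum K h.
Proof. induction K; simpl; [lra|]. rewrite IHK; lra. Qed.

Lemma fsum_minus K g h : fsum K (fun k => g k - h k) = fsum K g - fsum K h.
Proof. induction K; simpl; [lra|]. rewrite IHK; lra. Qed.

Lemma fsum_scal K c g : fsum K (fun k => c * g k) = c * fsum K g.
Proof. induction K; simpl; [lra|]. rewrite IHK; lra. Qed.

Lemma fsum_le K g h : (forall k, In k K -> g k <= h k) -> fsum K g <= fsum K h.
Proof.
  induction K as [|k K IH]; simpl; intros H; [lra|].
  pose proof (H k (or_introl eq_refl)). pose proof (IH (fun l Hl => H l (or_intror Hl))). lra.
Qed.

Lemma fsum_eq0 K g : (forall k, In k K -> g k = 0) -> fsum K g = 0.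
Proof.
  induction K as [|k K IH]; simpl; intros H; [reflexivity|].
  rewrite H, IH by auto. lra.
Qed.

Lemma fsum_ge0 K g : (forall k, In k K -> 0 <= g k) -> 0 <= fsum K g.
Proof.
  intros H. apply Rle_trans with (fsum K (fun _ => 0)); [|now apply fsum_le].
  rewrite fsum_eq0; auto; lra.
Qed.

Lemma fsum_le_drop F h k0 : NoDup F -> 0 <= h k0 ->
  fsum F h <= fsum F (fun k => if idx_eq_dec k k0 then 0 else h k) + h k0.
Proof.
  induction F as [|k1 F IH]; intros Hnd H0; simpl; [lra|].
  inversion Hnd as [|? ? Hk1 HF]; subst.
  destruct (idx_eq_dec k1 k0) as [->|Hne].
  - rewrite (fsum_ext F h (fun k => if idx_eq_dec k k0 then 0 else h k)); [lra|].
    intros k Hk. destruct (idx_eq_dec k k0) as [->|]; [contradiction|reflexivity].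
  - specialize (IH HF H0). lra.
Qed.

Lemma fsum_le_support K F h : NoDup K -> NoDup F -> (forall k, 0 <= h k) ->
  (forall k, ~ In k K -> h k = 0) -> fsum F h <= fsum K h.
Proof.
  revert F h. induction K as [|k0 K IH]; intros F h HK HF Hh Hz.
  - rewrite fsum_eq0 by (intros k _; apply Hz; auto). simpl; lra.
  - inversion HK as [|? ? Hk0 HK']; subst.
    set (h' := fun k => if idx_eq_dec k k0 then 0 else h k).
    assert (IH' : fsum F h' <= fsum K h').
    { apply IH; auto; intros k; unfold h'; destruct (idx_eq_dec k k0) as [->|Hne]; auto; [lra|].
      intros Hk. apply Hz. intros [->|]; auto. }
    rewrite (fsum_ext K h' h) in IH'.
    + pose proof (fsum_le_drop F h k0 HF (Hh k0)) as E. fold h' in E. simpl. lra.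
    + intros k Hk. unfold h'. destruct (idx_eq_dec k k0) as [->|]; [contradiction|reflexivity].
Qed.

Definition linear_in_first (N : nat) (phi : (nat -> R) -> R) : Prop :=
  (forall x y a b, phi (fun j => a * x j + b * y j) = a * phi x + b * phi y) /\
  (forall x y, (forall j, (j < N)%nat -> x j = y j) -> phi x = phi y).

Definition truncate (N : nat) (x : nat -> R) : nat -> R :=
  fun j => if Nat.ltb j N then x j else 0.

Lemma linear_truncate N phi : linear_in_first (S N) phi ->
  linear_in_first N (fun x => phi (truncate N x)).
Proof.
  intros [Hlin Hloc]. split.
  - intros x y a b. rewrite <- Hlin. apply Hloc. intros j _.
    unfold truncate. destruct (Nat.ltb j N); ring.
  - intros x y Hxy. apply Hloc. intros j _. unfold truncate.
    destruct (Nat.ltb j N) eqn:E; [apply Hxy, Nat.ltb_lt, E|reflexivity].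
Qed.

Lemma linear_in_first_comb N phi psi c :
  linear_in_first N phi -> linear_in_first N psi ->
  linear_in_first N (fun x => phi x - c * psi x).
Proof.
  intros [Hl1 Hc1] [Hl2 Hc2]. split.
  - intros x y a b. rewrite Hl1, Hl2. ring.
  - intros x y Hxy. rewrite (Hc1 x y), (Hc2 x y); auto.
Qed.

(* Gaussian elimination: use a functional [phi0] with [phi0 e <> 0], [e] the last unit
   vector, to eliminate the last coordinate from the others, then solve the smaller
   system by induction and correct the solution along [e]. *)
Lemma linear_system_nontrivial_solution N phis :
  (length phis < N)%nat -> Forall (linear_in_first N) phis ->
  exists x, (exists j, (j < N)%nat /\ x j <> 0) /\ Forall (fun phi => phi x = 0) phis.
Proof.
  revert phis. induction N as [|N IH]; intros phis Hlen Hlin; [lia|].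
  rewrite Forall_forall in Hlin.
  set (e := fun j => if Nat.eqb j N then 1 else 0).
  assert (He : e N <> 0) by (unfold e; rewrite Nat.eqb_refl; lra).
  destruct (classic (exists phi0, In phi0 phis /\ phi0 e <> 0)) as [[phi0 [Hin0 Hne0]] | Hno].
  2: { exists e. split; [exists N; auto|].
       apply Forall_forall. intros phi Hin. apply NNPP. intros Hc. apply Hno. eauto. }
  destruct (in_split _ _ Hin0) as [l1 [l2 Heq]].
  set (T := fun phi x => phi (truncate N x) - (phi e / phi0 e) * phi0 (truncate N x)).
  destruct (IH (map T (l1 ++ l2))) as [y [Hy0 Hy]].
  { rewrite length_map, length_app. rewrite Heq, length_app in Hlen. simpl in Hlen. lia. }
  { apply Forall_forall. intros psi Hpsi. apply in_map_iff in Hpsi.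
    destruct Hpsi as [phi [<- Hphi]].
    apply (linear_in_first_comb N (fun x => phi (truncate N x)) (fun x => phi0 (truncate N x)));
      apply linear_truncate, Hlin; auto.
    rewrite Heq. apply in_app_or in Hphi. apply in_or_app. simpl. tauto. }
  rewrite Forall_forall in Hy.
  set (t := - phi0 (truncate N y) / phi0 e).
  exists (fun j => 1 * truncate N y j + t * e j). split.
  - destruct Hy0 as [j [Hj Hyj]]. exists j. split; [lia|].
    unfold truncate, e. rewrite (proj2 (Nat.ltb_lt j N) Hj), (proj2 (Nat.eqb_neq j N)) by lia.
    rewrite Rmult_0_r, Rplus_0_r, Rmult_1_l. exact Hyj.
  - apply Forall_forall. intros phi Hin. rewrite (proj1 (Hlin phi Hin)).
    assert (Hphi : phi = phi0 \/ T phi y = 0).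
    { rewrite Heq in Hin. apply in_app_or in Hin. destruct Hin as [Hin|[Hin|Hin]]; auto;
        right; apply Hy, in_map, in_or_app; auto. }
    unfold T, t in *. destruct Hphi as [->|Hphi].
    + field; auto.
    + rewrite <- Hphi. field; auto.
Qed.

Fixpoint vec_on (K : list Idx) (z : nat -> R) (k : Idx) : Cx :=
  match K with
  | nil => C0
  | k0 :: K' => if idx_eq_dec k k0 then (z 0%nat, z 1%nat)
                else vec_on K' (fun j => z (S (S j))) k
  end.

Lemma vec_on_out K z k : ~ In k K -> vec_on K z k = C0.
Proof.
  revert z. induction K as [|k0 K IH]; intros z H; simpl; [reflexivity|].
  destruct (idx_eq_dec k k0) as [->|]; [exfalso; apply H; simpl; auto|].
  apply IH. intros Hk. apply H. simpl; auto.
Qed.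

Lemma vec_on_lin K x y a b k : vec_on K (fun j => a * x j + b * y j) k =
  (a * fst (vec_on K x k) + b * fst (vec_on K y k),
   a * snd (vec_on K x k) + b * snd (vec_on K y k)).
Proof.
  revert x y. induction K as [|k0 K IH]; intros x y; simpl.
  - unfold C0; simpl; f_equal; ring.
  - destruct (idx_eq_dec k k0); simpl; auto.
Qed.

Lemma vec_on_local K x y k : (forall j, (j < 2 * length K)%nat -> x j = y j) ->
  vec_on K x k = vec_on K y k.
Proof.
  revert x y. induction K as [|k0 K IH]; intros x y H; simpl; [reflexivity|].
  destruct (idx_eq_dec k k0).
  - rewrite (H 0%nat), (H 1%nat) by (simpl; lia). reflexivity.
  - apply IH. intros j Hj. apply H. simpl. lia.
Qed.

Lemma Cnorm2_ge0 c : 0 <= Cnorm2 c.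
Proof. unfold Cnorm2. pose proof (pow2_ge_0 (fst c)). pose proof (pow2_ge_0 (snd c)). lra. Qed.

Lemma Cnorm2_pos x y : x <> 0 \/ y <> 0 -> 0 < Cnorm2 (x, y).
Proof.
  unfold Cnorm2; simpl. rewrite !Rmult_1_r.
  intros [H|H]; [pose proof (Rsqr_pos_lt x H) | pose proof (Rsqr_pos_lt y H)];
    unfold Rsqr in *; nra.
Qed.

Lemma fsum_vec_on_pos K (w : Idx -> R) z : NoDup K -> (forall k, In k K -> 0 < w k) ->
  (exists j, (j < 2 * length K)%nat /\ z j <> 0) ->
  0 < fsum K (fun k => w k * Cnorm2 (vec_on K z k)).
Proof.
  revert z. induction K as [|k0 K IH]; intros z Hnd Hw [j [Hj Hz]]; simpl in Hj; [lia|].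
  inversion Hnd as [|? ? Hk0 HK]; subst.
  assert (E : fsum (k0 :: K) (fun k => w k * Cnorm2 (vec_on (k0 :: K) z k)) =
    w k0 * Cnorm2 (z 0%nat, z 1%nat) +
    fsum K (fun k => w k * Cnorm2 (vec_on K (fun j => z (S (S j))) k))).
  { simpl. destruct (idx_eq_dec k0 k0) as [_|]; [|congruence]. f_equal.
    apply fsum_ext. intros k Hk. destruct (idx_eq_dec k k0) as [->|]; [contradiction|reflexivity]. }
  rewrite E.
  assert (Hw0 : 0 < w k0) by (apply Hw; simpl; auto).
  assert (Hw' : forall k, In k K -> 0 < w k) by (intros; apply Hw; simpl; auto).
  pose proof (Cnorm2_ge0 (z 0%nat, z 1%nat)).
  destruct (lt_dec j 2) as [Hj2|Hj2].
  - assert (0 < Cnorm2 (z 0%nat, z 1%nat)).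
    { apply Cnorm2_pos. destruct j as [|[|j]]; [left|right|lia]; exact Hz. }
    assert (0 <= fsum K (fun k => w k * Cnorm2 (vec_on K (fun j => z (S (S j))) k))).
    { apply fsum_ge0. intros k Hk. apply Rmult_le_pos; [left; auto|apply Cnorm2_ge0]. }
    nra.
  - assert (0 < fsum K (fun k => w k * Cnorm2 (vec_on K (fun j => z (S (S j))) k))).
    { apply IH; auto. exists (j - 2)%nat. split; [lia|].
      replace (S (S (j - 2))) with j by lia. exact Hz. }
    nra.
Qed.

Definition re_inner (K : list Idx) (f v : Seq) : R :=
  fsum K (fun k => fst (f k) * fst (v k) + snd (f k) * snd (v k)).
Definition im_inner (K : list Idx) (f v : Seq) : R :=
  fsum K (fun k => snd (f k) * fst (v k) - fst (f k) * snd (v k)).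

Lemma re_inner_lincomb K f vs cs :
  (forall v, In v vs -> re_inner K f v = 0 /\ im_inner K f v = 0) ->
  re_inner K f (lincomb cs vs) = 0.
Proof.
  revert cs. induction vs as [|v vs IH]; intros cs H.
  - destruct cs; apply fsum_eq0; intros; simpl; unfold C0; simpl; ring.
  - destruct cs as [|c cs].
    + apply fsum_eq0; intros; simpl; unfold C0; simpl; ring.
    + cbn [lincomb]. destruct (H v (or_introl eq_refl)) as [H1 H2].
      assert (E : re_inner K f (Sadd (Sscale c v) (lincomb cs vs)) =
                  fst c * re_inner K f v + snd c * im_inner K f v + re_inner K f (lincomb cs vs)).
      { unfold re_inner, im_inner. rewrite <- !fsum_scal, <- !fsum_plus.
        apply fsum_ext. intros k _. unfold Sadd, Sscale, Cadd, Cmul. simpl. ring. }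
      rewrite E, H1, H2, IH; [ring|]. intros; apply H; simpl; auto.
Qed.

Lemma length_flat_map_pair (A B : Type) (p q : A -> B) (vs : list A) :
  length (flat_map (fun v => p v :: q v :: nil) vs) = (2 * length vs)%nat.
Proof. induction vs; simpl; auto. rewrite IHvs. lia. Qed.

(* Each complex orthogonality condition is two real linear equations in the
   [2 * length K] real coordinates of [vec_on K z]. *)
Lemma exists_orthogonal_vec_on K vs : (length vs < length K)%nat ->
  exists z, (exists j, (j < 2 * length K)%nat /\ z j <> 0) /\
    forall v, In v vs -> re_inner K (vec_on K z) v = 0 /\ im_inner K (vec_on K z) v = 0.
Proof.
  intros Hlen.
  set (phis := flat_map (fun v => (fun z => re_inner K (vec_on K z) v) ::
                                  (fun z => im_inner K (vec_on K z) v) :: nil) vs).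
  destruct (linear_system_nontrivial_solution (2 * length K) phis) as [z [Hz Hphis]].
  { unfold phis. rewrite length_flat_map_pair. lia. }
  { apply Forall_forall. intros phi Hin. unfold phis in Hin. apply in_flat_map in Hin.
    destruct Hin as [v [_ Hin]]. simpl in Hin.
    destruct Hin as [<-|[<-|[]]]; split; unfold re_inner, im_inner.
    - intros x y a b. rewrite <- !fsum_scal, <- fsum_plus.
      apply fsum_ext; intros k _. rewrite vec_on_lin. simpl. ring.
    - intros x y Hxy. apply fsum_ext. intros k _. now rewrite (vec_on_local K x y k Hxy).
    - intros x y a b. rewrite <- !fsum_scal, <- fsum_plus.
      apply fsum_ext; intros k _. rewrite vec_on_lin. simpl. ring.
    - intros x y Hxy. apply fsum_ext. intros k _. now rewrite (vec_on_local K x y k Hxy). }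
  exists z. split; [exact Hz|]. rewrite Forall_forall in Hphis. intros v Hv.
  split; [apply (Hphis (fun z => re_inner K (vec_on K z) v))
        | apply (Hphis (fun z => im_inner K (vec_on K z) v))];
    apply in_flat_map; exists v; simpl; auto.
Qed.

Lemma lt_inv_sq_iff eps r : 0 < eps -> r < / eps ^ 2 <-> eps ^ 2 * r < 1.
Proof.
  intros He. assert (He2 : 0 < eps ^ 2) by (apply pow_lt; auto).
  rewrite <- (Rinv_r (eps ^ 2)) by lra. split; intros H.
  - apply Rmult_lt_compat_l; auto.
  - apply Rmult_lt_reg_l in H; auto.
Qed.

Lemma sq_mul_lt1_slack eps r : 0 < eps -> 0 <= r -> eps ^ 2 * r < 1 ->
  exists d0, 0 < d0 /\ forall dl, 0 < dl <= d0 -> (eps + dl) ^ 2 * r < 1.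
Proof.
  intros He Hr H.
  set (q := (1 - eps ^ 2 * r) / ((2 * eps + 1) * r + 1)).
  assert (Hq : 0 < q) by (unfold q; apply Rdiv_lt_0_compat; nra).
  assert (Hqd : q * ((2 * eps + 1) * r + 1) = 1 - eps ^ 2 * r) by (unfold q; field; nra).
  exists (Rmin 1 q). split; [apply Rmin_glb_lt; lra|].
  intros dl [H1 H2].
  pose proof (Rle_trans _ _ _ H2 (Rmin_l 1 q)). pose proof (Rle_trans _ _ _ H2 (Rmin_r 1 q)).
  assert (dl * ((2 * eps + 1) * r + 1) <= q * ((2 * eps + 1) * r + 1))
    by (apply Rmult_le_compat_r; nra).
  assert (dl * dl * r <= dl * r) by (apply Rmult_le_compat_r; nra).
  nra.
Qed.

Section DiagonalEmbedding.

Variables (d : nat) (rho : Idx -> R).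
Hypothesis rho_ge0 : forall k, 0 <= rho k.

Lemma sublevel_slack eps K : 0 < eps -> (forall k, In k K -> eps ^ 2 * rho k < 1) ->
  exists delta, 0 < delta /\ forall k, In k K -> (eps + delta) ^ 2 * rho k < 1.
Proof.
  intros He. induction K as [|k0 K IH]; intros H.
  - exists 1. split; [lra|]. intros _ [].
  - destruct IH as [d1 [Hd1 H1]]; [intros; apply H; simpl; auto|].
    destruct (sq_mul_lt1_slack eps (rho k0) He (rho_ge0 k0) (H k0 (or_introl eq_refl)))
      as [d2 [Hd2 H2]].
    exists (Rmin d1 d2). split; [apply Rmin_glb_lt; lra|].
    intros k [<-|Hk]; [apply H2|].
    + split; [apply Rmin_glb_lt; lra|apply Rmin_r].
    + assert (Hle : (eps + Rmin d1 d2) ^ 2 * rho k <= (eps + d1) ^ 2 * rho k).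
      { apply Rmult_le_compat_r; auto. pose proof (Rmin_l d1 d2).
        assert (0 < Rmin d1 d2) by (apply Rmin_glb_lt; lra). simpl; nra. }
      pose proof (H1 k Hk). lra.
Qed.

(* The test vector is supported on [K] and orthogonal to the range of [A], so
   [||f - A f||^2 >= ||f||^2 > c^2 ||f||_rho^2]. *)
Lemma not_opnorm_diff_le_low_rank K A c : NoDup K ->
  (forall k, In k K -> length k = d /\ c ^ 2 * rho k < 1) ->
  rank_lt d rho A (length K) -> ~ opnorm_diff_le d rho A c.
Proof.
  intros Hnd HK [vs [Hvs [_ Hrep]]] Hop.
  destruct (exists_orthogonal_vec_on K vs Hvs) as [z [Hz Horth]].
  set (f := vec_on K z).
  set (M := fsum K (fun k => rho k * Cnorm2 (f k))).
  assert (HM : wnorm2_le d rho f M).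
  { intros F [HF _]. apply fsum_le_support; auto.
    - intros k. apply Rmult_le_pos; [auto|apply Cnorm2_ge0].
    - intros k Hk. unfold f. rewrite vec_on_out by auto. unfold Cnorm2, C0; simpl; ring. }
  destruct (Hrep f (ex_intro _ M HM)) as [cs [_ Hcs]].
  assert (HKd : finset d K) by (split; auto; apply Forall_forall; intros k Hk; apply HK; auto).
  specialize (Hop f M HM K HKd).
  assert (Horth_Af : re_inner K f (A f) = 0).
  { rewrite <- (re_inner_lincomb K f vs cs Horth). apply fsum_ext.
    intros k Hk. rewrite (Hcs k (proj1 (HK k Hk))). reflexivity. }
  assert (Hpyth : fsum K (fun k => Cnorm2 (f k)) - 2 * re_inner K f (A f) <=
                  fsum K (fun k => rho_L2 k * Cnorm2 (Ssub f (A f) k))).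
  { unfold re_inner. rewrite <- fsum_scal, <- fsum_minus. apply fsum_le. intros k _.
    unfold rho_L2, Ssub, Csub, Cnorm2. simpl.
    pose proof (pow2_ge_0 (fst (A f k))). pose proof (pow2_ge_0 (snd (A f k))). nra. }
  assert (Hpos : 0 < fsum K (fun k => (1 - c ^ 2 * rho k) * Cnorm2 (f k))).
  { apply fsum_vec_on_pos; auto. intros k Hk. pose proof (proj2 (HK k Hk)). lra. }
  assert (E : fsum K (fun k => (1 - c ^ 2 * rho k) * Cnorm2 (f k)) =
              fsum K (fun k => Cnorm2 (f k)) - c ^ 2 * M).
  { unfold M. rewrite <- fsum_scal, <- fsum_minus. apply fsum_ext. intros k _. ring. }
  lra.
Qed.

Lemma not_approx_num_le_of_distinct eps n K : 0 < eps -> NoDup K -> length K = S n ->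
  (forall k, In k K -> length k = d /\ rho k < / eps ^ 2) ->
  ~ approx_num_le d rho (S n) eps.
Proof.
  intros He Hnd HlenK HK Happ.
  destruct (sublevel_slack eps K He) as [delta [Hd Hdk]].
  { intros k Hk. apply lt_inv_sq_iff; auto. apply HK; auto. }
  destruct (Happ delta Hd) as [A [_ [Hrank Hop]]].
  rewrite <- HlenK in Hrank.
  apply (not_opnorm_diff_le_low_rank K A (eps + delta)); auto.
  intros k Hk. split; auto. apply HK; auto.
Qed.

Definition proj (F0 : list Idx) (f : Seq) : Seq :=
  fun k => if in_dec idx_eq_dec k F0 then f k else C0.
Definition unitv (k0 : Idx) : Seq := fun k => if idx_eq_dec k k0 then (1, 0) else C0.

Lemma lincomb_unitv F0 f k : NoDup F0 -> lincomb (map f F0) (map unitv F0) k = proj F0 f k.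
Proof.
  induction F0 as [|k0 F0 IH]; intros Hnd; [reflexivity|].
  inversion Hnd as [|? ? Hk0 HF0]; subst. cbn [map lincomb]. unfold Sadd, Sscale.
  rewrite IH by auto. unfold proj, unitv.
  destruct (in_dec idx_eq_dec k (k0 :: F0)) as [Hin|Hnin];
    destruct (in_dec idx_eq_dec k F0) as [HinF|HninF];
    destruct (idx_eq_dec k k0) as [->|Hne];
    try (exfalso; simpl in *; intuition congruence);
    repeat match goal with |- context [f ?x] => destruct (f x) end;
    unfold Cadd, Cmul, C0; simpl; f_equal; ring.
Qed.

Lemma unitv_inspace k0 : inspace d rho_L2 (unitv k0).
Proof.
  exists 1. intros F [HF _].
  apply Rle_trans with (fsum (k0 :: nil) (fun k => rho_L2 k * Cnorm2 (unitv k0 k))).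
  - apply fsum_le_support; auto.
    + constructor; [simpl; tauto|constructor].
    + intros k. unfold rho_L2. rewrite Rmult_1_l. apply Cnorm2_ge0.
    + intros k Hk. unfold unitv. destruct (idx_eq_dec k k0) as [->|].
      * exfalso; apply Hk; simpl; auto.
      * unfold Cnorm2, C0; simpl; ring.
  - simpl. unfold unitv. destruct (idx_eq_dec k0 k0); [|congruence].
    unfold rho_L2, Cnorm2; simpl; lra.
Qed.

Lemma wnorm2_le_ge0 f M : wnorm2_le d rho f M -> 0 <= M.
Proof. intros H. apply (H nil). split; constructor. Qed.

Lemma opnorm_diff_le_mono A c c' : 0 <= c <= c' ->
  opnorm_diff_le d rho A c -> opnorm_diff_le d rho A c'.
Proof.
  intros Hc H f M HM F HF. pose proof (wnorm2_le_ge0 f M HM).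
  apply Rle_trans with (c ^ 2 * M); [now apply H|].
  apply Rmult_le_compat_r; auto. apply pow_incr; auto.
Qed.

Lemma opnorm_diff_le_proj eps F0 : 0 < eps ->
  (forall k, length k = d -> rho k < / eps ^ 2 -> In k F0) ->
  opnorm_diff_le d rho (proj F0) eps.
Proof.
  intros He Hcov f M HM F HF. specialize (HM F HF).
  apply Rle_trans with (fsum F (fun k => eps ^ 2 * (rho k * Cnorm2 (f k))));
    [|rewrite fsum_scal; apply Rmult_le_compat_l; auto; apply pow2_ge_0].
  apply fsum_le. intros k Hk. destruct HF as [_ HFl]. rewrite Forall_forall in HFl.
  unfold rho_L2, Ssub, proj. pose proof (Cnorm2_ge0 (f k)).
  assert (0 <= eps ^ 2 * rho k) by (apply Rmult_le_pos; auto; apply pow2_ge_0).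
  destruct (in_dec idx_eq_dec k F0) as [Hi|Hni].
  - replace (Cnorm2 (Csub (f k) (f k))) with 0
      by (destruct (f k); unfold Csub, Cnorm2; simpl; ring).
    nra.
  - replace (Cnorm2 (Csub (f k) C0)) with (Cnorm2 (f k))
      by (destruct (f k); unfold Csub, Cnorm2, C0; simpl; ring).
    assert (1 <= eps ^ 2 * rho k).
    { apply Rnot_lt_le. intros Hlt. apply Hni, Hcov; auto. apply lt_inv_sq_iff; auto. }
    nra.
Qed.

Definition covered (P : Idx -> Prop) (n : nat) : Prop :=
  exists F0, finset d F0 /\ (length F0 <= n)%nat /\
    forall k, length k = d -> P k -> In k F0.

Lemma approx_num_le_of_covered eps n : 0 < eps ->
  covered (fun k => rho k < / eps ^ 2) n -> approx_num_le d rho (S n) eps.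
Proof.
  intros He [F0 [[Hnd HF0] [Hl Hcov]]] delta Hd. exists (proj F0). split; [|split].
  - intros f g z _ _ k _. unfold proj, Sadd, Sscale.
    destruct (in_dec idx_eq_dec k F0); [reflexivity|].
    destruct z; unfold Cadd, Cmul, C0; simpl; f_equal; ring.
  - exists (map unitv F0). split; [rewrite length_map; lia|split].
    + apply Forall_forall. intros v Hv. apply in_map_iff in Hv.
      destruct Hv as [k0 [<- _]]. apply unitv_inspace.
    + intros f _. exists (map f F0). split; [now rewrite !length_map|].
      intros k _. symmetry. now apply lincomb_unitv.
  - apply (opnorm_diff_le_mono _ eps); [lra|]. now apply opnorm_diff_le_proj.
Qed.

Lemma distinct_of_not_covered (P : Idx -> Prop) n : ~ covered P n ->
  forall m, (m <= S n)%nat -> exists K : list Idx, NoDup K /\ length K = m /\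
    forall k, In k K -> length k = d /\ P k.
Proof.
  intros Hno. induction m as [|m IH]; intros Hm.
  - exists nil. split; [constructor|split; [reflexivity|intros k []]].
  - destruct (IH ltac:(lia)) as [K [HK [HKl HKP]]].
    assert (Hnew : exists k, length k = d /\ P k /\ ~ In k K).
    { apply NNPP. intros Hc. apply Hno. exists K.
      split; [split; [auto|apply Forall_forall; intros; apply HKP; auto]|].
      split; [lia|]. intros k Hkd HkP. apply NNPP. intros Hk. apply Hc. exists k; auto. }
    destruct Hnew as [k [Hkd [HkP Hk]]].
    exists (k :: K). split; [constructor; auto|split; [simpl; lia|]].
    intros k' [<-|Hk']; auto.
Qed.

Lemma approx_num_le_iff_covered eps n : 0 < eps ->
  approx_num_le d rho (S n) eps <-> covered (fun k => rho k < / eps ^ 2) n.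
Proof.
  intros He. split; [|now apply approx_num_le_of_covered].
  intros Happ. apply NNPP. intros Hno.
  destruct (distinct_of_not_covered _ n Hno (S n) (le_n _)) as [K [Hnd [HKl HK]]].
  exact (not_approx_num_le_of_distinct eps n K He Hnd HKl HK Happ).
Qed.

End DiagonalEmbedding.

Lemma is_ncomp_iff d rho1 rho2 e1 e2 m :
  (forall n, approx_num_le d rho1 (S n) e1 <-> approx_num_le d rho2 (S n) e2) ->
  is_ncomp d rho1 e1 m <-> is_ncomp d rho2 e2 m.
Proof.
  intros H. unfold is_ncomp. rewrite H.
  split; intros [Hm Hmin]; split; auto; intros n Hn; apply Hmin, H, Hn.
Qed.

Lemma is_ncomp_iff_of_sublevel d rho1 rho2 e1 e2 m :
  (forall k, 0 <= rho1 k) -> (forall k, 0 <= rho2 k) -> 0 < e1 -> 0 < e2 ->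
  (forall k, length k = d -> rho1 k < / e1 ^ 2 <-> rho2 k < / e2 ^ 2) ->
  is_ncomp d rho1 e1 m <-> is_ncomp d rho2 e2 m.
Proof.
  intros H1 H2 He1 He2 Hs. apply is_ncomp_iff. intros n.
  rewrite (approx_num_le_iff_covered d rho1 H1), (approx_num_le_iff_covered d rho2 H2) by auto.
  split; intros [F0 [HF [Hl Hc]]]; exists F0; (split; [auto|split; [auto|]]);
    intros k Hk Hr; apply Hc; auto; apply Hs; auto.
Qed.

Lemma rpow_ge0 x y : 0 <= rpow x y.
Proof. unfold rpow. destruct (Req_EM_T x 0); [lra|]. left; apply exp_pos. Qed.

Lemma wsum_ge0 a b : (forall j, (1 <= j)%nat -> 0 <= a j) ->
  forall k j, (1 <= j)%nat -> 0 <= wsum a b j k.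
Proof.
  intros Ha k. induction k as [|kj k IH]; intros j Hj; simpl; [lra|].
  pose proof (Ha j Hj). pose proof (rpow_ge0 (IZR (Z.abs kj)) (2 * b j)).
  pose proof (IH (S j) ltac:(lia)). nra.
Qed.

Lemma rho_W_pos a b k : (forall j, (1 <= j)%nat -> 0 <= a j) -> 0 < rho_W a b k.
Proof. intros Ha. unfold rho_W, weight. pose proof (wsum_ge0 a b Ha k 1 (le_n _)). lra. Qed.

Lemma rho_H_exp omega a b k : 0 < omega ->
  rho_H omega a b k = exp (weight a b k * ln (/ omega)).
Proof.
  intros H. unfold rho_H, omega_k, Rpower. rewrite ln_Rinv, <- exp_Ropp by auto.
  f_equal. ring.
Qed.

Lemma ln_inv_pos x : 0 < x < 1 -> 0 < ln (/ x).
Proof.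
  intros H. rewrite <- ln_1. apply ln_increasing; [lra|].
  apply (Rmult_lt_reg_l x); [lra|]. rewrite Rinv_r; lra.
Qed.

Lemma rho_H_lt_iff omega a b k t : 0 < omega < 1 ->
  rho_H omega a b k < exp (t * ln (/ omega)) <-> weight a b k < t.
Proof.
  intros H. pose proof (ln_inv_pos omega H). rewrite rho_H_exp by lra.
  split; intros Hlt.
  - apply exp_lt_inv in Hlt. nra.
  - apply exp_increasing. nra.
Qed.

Lemma inv_sq_inv_sqrt x : 0 < x -> / (/ sqrt x) ^ 2 = x.
Proof. intros H. rewrite pow_inv, Rinv_inv, pow2_sqrt; lra. Qed.

Lemma inv_sq_Rpower_half omega c : 0 < omega ->
  / Rpower omega (c / 2) ^ 2 = exp (c * ln (/ omega)).
Proof.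
  intros H. unfold Rpower. rewrite ln_Rinv by auto.
  simpl. rewrite Rmult_1_r, <- exp_plus, <- exp_Ropp. f_equal. field.
Qed.

Theorem theorem2p7 :
  forall (a b : nat -> R) (omega : R),
    (forall j, (1 <= j)%nat -> 0 < a j) ->
    (forall j, (1 <= j)%nat -> a j <= a (S j)) ->
    (forall j, (1 <= j)%nat -> 0 < b j) ->
    (exists beta, 0 < beta /\ forall j, (1 <= j)%nat -> beta <= b j) ->
    0 < omega < 1 ->
    forall (eps : R) (d : nat), 0 < eps < 1 -> (1 <= d)%nat ->
      (forall m : nat,
         is_ncomp d (rho_H omega a b) eps m <->
         is_ncomp d (rho_W a b)
           (/ sqrt (ln (/ eps ^ 2) / ln (/ omega) + 1)) m) /\
      (forall m : nat,
         is_ncomp d (rho_W a b) eps m <->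
         is_ncomp d (rho_H omega a b)
           (Rpower omega ((/ eps ^ 2 - 1) / 2)) m).
Proof.
  intros a b omega Ha _ _ _ Hom eps d Heps _.
  assert (Ha0 : forall j, (1 <= j)%nat -> 0 <= a j) by (intros; left; auto).
  assert (HW : forall k, 0 <= rho_W a b k) by (intros; left; apply rho_W_pos; auto).
  assert (HH : forall k, 0 <= rho_H omega a b k)
    by (intros; rewrite rho_H_exp by lra; left; apply exp_pos).
  assert (He2 : 0 < eps ^ 2 < 1) by (split; simpl; nra).
  pose proof (ln_inv_pos omega Hom) as Hl. pose proof (ln_inv_pos _ He2) as HE.
  set (t := ln (/ eps ^ 2) / ln (/ omega)).
  assert (Ht : 0 < t) by (apply Rdiv_lt_0_compat; auto).
  assert (Hthr : exp (t * ln (/ omega)) = / eps ^ 2).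
  { unfold t. replace (_ / _ * _) with (ln (/ eps ^ 2)) by (field; lra).
    apply exp_ln, Rinv_0_lt_compat. lra. }
  split; intros m; apply is_ncomp_iff_of_sublevel; auto; try lra.
  - apply Rinv_0_lt_compat, sqrt_lt_R0. lra.
  - intros k _. rewrite inv_sq_inv_sqrt, <- Hthr, rho_H_lt_iff by lra. unfold rho_W. lra.
  - apply exp_pos.
  - intros k _. rewrite inv_sq_Rpower_half, rho_H_lt_iff by lra. unfold rho_W. lra.
Qed.
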